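(* Let $\mathcal S$ be a productive higher-order recursion scheme and $\mathcal A$ a restriction such that for every symbol $a^r$ appearing in any tree generated by $\mathcal S$ there is a transition of $\mathcal A$ having $a^r$ on its left side. Then one can build a higher-order recursion scheme $\mathcal S'$ whose language is the image of $L(\mathcal S)$ under $T(\mathcal A)$.
   Context: A higher-order recursion scheme (HORS) $\mathcal S=(A_{init},\mathcal R)$ has an initial nonterminal $A_{init}$ of sort $o$ and a finite set of (possibly several per nonterminal) rules $A\,x_1\dots x_k\to K$, $K$ a simply-typed applicative term of sort $o$ built from symbols $a^r$ (sort $o^r\to o$), nonterminals and the variables $x_i$; reduction rewrites $A\,M_1\dots M_k$ into $K[M_1/x_1,\dots,M_k/x_k]$ (also inside arguments of symbols), and $L(\mathcal S)$ is the set of finite trees (closed sort-$o$ terms without nonterminals) reachable from $A_{init}$. $\mathcal S$ is productive if every term reachable from $A_{init}$ can be reduced to some finite tree. A bottom-up finite tree transducer $\mathcal A$ defines a relation $T(\mathcal A)$ on trees in the standard way; a restriction is such a transducer with a single (final) state $q$ all of whose transitions have the form $a^r\,(q,x_1)\dots(q,x_r)\to q,\,b^n\,x_{i_1}\dots x_{i_n}$ with $1\le i_1<\dots<i_n\le r$ (relabel a node and discard some of its subtrees). *)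

From Stdlib Require Import List Arith Relations Sorted.
Import ListNotations.

Inductive sort : Type :=
| O : sort
| Arr : sort -> sort -> sort.

Fixpoint sym_sort (r : nat) : sort :=
  match r with 0 => O | S r' => Arr O (sym_sort r') end.

Definition arrows (ss : list sort) : sort := fold_right Arr O ss.

(** Finite ranked trees: a node labelled [a] with [r] children is the
    symbol a^r applied to its r subtrees. *)
Inductive tree : Type :=
| Node : nat -> list tree -> tree.

(** Applicative terms: symbols a^r (label a, rank r), nonterminals,
    variables x_1..x_k (encoded as Var 0 .. Var (k-1)), application. *)
Inductive term : Type :=
| Sym : nat -> nat -> term
| NT : nat -> term
| Var : nat -> term
| App : term -> term -> term.

Definition apps (h : term) (l : list term) : term := fold_left App l h.

Record rule : Type := mkRule {
  r_lhs : nat;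
  r_params : list sort;
  r_body : term
}.

Record hors : Type := mkHORS {
  h_ntsort : nat -> sort;
  h_init : nat;
  h_rules : list rule
}.

Inductive has_sort (N : nat -> sort) (G : list sort) : term -> sort -> Prop :=
| ty_sym a r : has_sort N G (Sym a r) (sym_sort r)
| ty_nt A : has_sort N G (NT A) (N A)
| ty_var i s : nth_error G i = Some s -> has_sort N G (Var i) s
| ty_app t u s1 s2 :
    has_sort N G t (Arr s1 s2) -> has_sort N G u s1 -> has_sort N G (App t u) s2.

Definition wf_rule (N : nat -> sort) (R : rule) : Prop :=
  N (r_lhs R) = arrows (r_params R) /\ has_sort N (r_params R) (r_body R) O.

Definition wf_hors (S : hors) : Prop :=
  h_ntsort S (h_init S) = O /\ forall R, In R (h_rules S) -> wf_rule (h_ntsort S) R.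

Fixpoint subst (Ms : list term) (t : term) : term :=
  match t with
  | Var i => nth i Ms (Var i)
  | App t u => App (subst Ms t) (subst Ms u)
  | _ => t
  end.

Inductive step (S : hors) : term -> term -> Prop :=
| step_rule R Ms :
    In R (h_rules S) -> length Ms = length (r_params R) ->
    step S (apps (NT (r_lhs R)) Ms) (subst Ms (r_body R))
| step_sym a r Ns1 N N' Ns2 :
    step S N N' ->
    step S (apps (Sym a r) (Ns1 ++ N :: Ns2)) (apps (Sym a r) (Ns1 ++ N' :: Ns2)).

Definition reduces (S : hors) : term -> term -> Prop := clos_refl_trans term (step S).

Definition reachable (S : hors) (t : term) : Prop := reduces S (NT (h_init S)) t.

Inductive is_tree : term -> tree -> Prop :=
| is_tree_node a Ns Ts :
    Forall2 is_tree Ns Ts ->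
    is_tree (apps (Sym a (length Ns)) Ns) (Node a Ts).

Definition in_lang (S : hors) (T : tree) : Prop :=
  exists t, reachable S t /\ is_tree t T.

Definition productive (S : hors) : Prop :=
  forall t, reachable S t -> exists t' T, reduces S t t' /\ is_tree t' T.

Inductive appears (a r : nat) : tree -> Prop :=
| appears_here Ts : length Ts = r -> appears a r (Node a Ts)
| appears_below b Ts T : In T Ts -> appears a r T -> appears a r (Node b Ts).

(** Transition of a restriction:
      a^r (q,x_1) .. (q,x_r) -> q, b^n x_{i_1} .. x_{i_n}
    with i_1 < .. < i_n; indices are stored 0-based in [t_kept]
    (so 0 <= i_1 < .. < i_n < r), and n = length t_kept. *)
Record transition : Type := mkTr {
  t_src : nat;
  t_rank : nat;
  t_tgt : nat;
  t_kept : list nat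
}.

Definition wf_transition (tr : transition) : Prop :=
  Sorted lt (t_kept tr) /\ Forall (fun i => i < t_rank tr) (t_kept tr).

(** A restriction: single (final) state q, finite set of transitions. *)
Definition restriction : Type := list transition.

Definition wf_restriction (A : restriction) : Prop :=
  forall tr, In tr A -> wf_transition tr.

Inductive transduce (A : restriction) : tree -> tree -> Prop :=
| transduce_node a Ts Us b kept :
    In (mkTr a (length Ts) b kept) A ->
    Forall2 (transduce A) Ts Us ->
    transduce A (Node a Ts) (Node b (map (fun i => nth i Us (Node 0 [])) kept)).

(* S' is S with every symbol a^r turned into a fresh nonterminal of sort o^r -> o, plus a
   rule [a^r] x_1 .. x_r -> b^n x_{i_1} .. x_{i_n} for each transition of A, so that a
   derivation of S' interleaves a derivation of S with a run of A.  The inclusion of L(S')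
   in the image of L(S) is the delicate direction: an argument discarded by a transition
   is never evaluated in S', so productivity of S is needed to supply a tree for it, and
   the covering hypothesis to supply a run of A on that tree.  Both directions are proved
   by induction on the fuel of a big-step evaluation, which is equivalent to reduction to
   a tree. *)

From Stdlib Require Import List Arith Lia Relations Sorted Wf_nat Cantor.
Import ListNotations.

Definition atomic (t : term) : Prop := match t with App _ _ => False | _ => True end.

Fixpoint unapps (t : term) : term * list term :=
  match t with
  | App t u => (fst (unapps t), snd (unapps t) ++ [u])
  | _ => (t, [])
  end.

Lemma apps_cons h x l : apps h (x :: l) = apps (App h x) l.
Proof. reflexivity. Qed.

Lemma unapps_apps l : forall h, unapps (apps h l) = (fst (unapps h), snd (unapps h) ++ l).
Proof.
  induction l as [|x l IH]; intros h.
  - change (apps h []) with h. rewrite app_nil_r. destruct (unapps h); reflexivity.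
  - rewrite apps_cons, IH. simpl. rewrite <- app_assoc. reflexivity.
Qed.

Lemma apps_inj h h' l l' :
  atomic h -> atomic h' -> apps h l = apps h' l' -> h = h' /\ l = l'.
Proof.
  intros Hh Hh' E. apply (f_equal unapps) in E. rewrite !unapps_apps in E.
  destruct h; try contradiction; destruct h'; try contradiction; inversion E; auto.
Qed.

Lemma apps_unapps t : atomic (fst (unapps t)) /\ t = apps (fst (unapps t)) (snd (unapps t)).
Proof.
  induction t as [| | |t1 [Ht1 E1] t2 _]; simpl; auto.
  split; auto. unfold apps. rewrite fold_left_app. fold (apps (fst (unapps t1)) (snd (unapps t1))).
  rewrite <- E1. reflexivity.
Qed.

Lemma subst_apps Ms l : forall h, subst Ms (apps h l) = apps (subst Ms h) (map (subst Ms) l).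
Proof. induction l; intros h; [reflexivity|]. rewrite !apps_cons, IHl. reflexivity. Qed.

Fixpoint tree_ind_nested (P : tree -> Prop)
  (f : forall a Ts, Forall P Ts -> P (Node a Ts)) (T : tree) : P T :=
  match T with
  | Node a Ts => f a Ts ((fix go (l : list tree) : Forall P l :=
      match l with
      | [] => Forall_nil _
      | T' :: l' => Forall_cons _ (tree_ind_nested P f T') (go l')
      end) Ts)
  end.

Section Evaluation.
Variable X : hors.

Definition evaluates (t : term) (T : tree) : Prop := exists t', reduces X t t' /\ is_tree t' T.

Inductive evaln : nat -> term -> tree -> Prop :=
| evaln_rule n R Ms T : In R (h_rules X) -> length Ms = length (r_params R) ->
    evaln n (subst Ms (r_body R)) T -> evaln (S n) (apps (NT (r_lhs R)) Ms) T
| evaln_sym n a Ns Ts : Forall2 (evaln n) Ns Ts ->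
    evaln (S n) (apps (Sym a (length Ns)) Ns) (Node a Ts).

Lemma evaln_S n : forall t T, evaln n t T -> evaln (S n) t T.
Proof.
  induction n; intros t T H; inversion H; subst.
  - eapply evaln_rule; eauto.
  - apply evaln_sym. eapply Forall2_impl; [|eassumption]. auto.
Qed.

Lemma evaln_le n m t T : n <= m -> evaln n t T -> evaln m t T.
Proof. induction 1; auto using evaln_S. Qed.

Lemma evaln_sym_inv n a r L T : evaln n (apps (Sym a r) L) T ->
  exists k Ts, n = S k /\ T = Node a Ts /\ r = length L /\ Forall2 (evaln k) L Ts.
Proof.
  intros H. inversion H; subst; match goal with E : apps _ _ = apps _ _ |- _ =>
    apply apps_inj in E as [E ?]; simpl; auto; inversion E; subst; eauto 10 end.
Qed.

Lemma evaln_nt_inv n k L T : evaln n (apps (NT k) L) T ->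
  exists m R, n = S m /\ In R (h_rules X) /\ r_lhs R = k /\
    length L = length (r_params R) /\ evaln m (subst L (r_body R)) T.
Proof.
  intros H. inversion H; subst; match goal with E : apps _ _ = apps _ _ |- _ =>
    apply apps_inj in E as [E ?]; simpl; auto; inversion E; subst; eauto 10 end.
Qed.

Lemma evaln_var_inv n i L T : ~ evaln n (apps (Var i) L) T.
Proof.
  intros H. inversion H; subst; match goal with E : apps _ _ = apps _ _ |- _ =>
    apply apps_inj in E as [E ?]; simpl; auto; discriminate end.
Qed.

Lemma reduces_sym_arg a r Ns1 N N' Ns2 : reduces X N N' ->
  reduces X (apps (Sym a r) (Ns1 ++ N :: Ns2)) (apps (Sym a r) (Ns1 ++ N' :: Ns2)).
Proof.
  induction 1.
  - apply rt_step, step_sym. assumption.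
  - apply rt_refl.
  - eapply rt_trans; eauto.
Qed.

Lemma reduces_sym_args a r Ns Ns' : Forall2 (reduces X) Ns Ns' -> forall pre,
  reduces X (apps (Sym a r) (pre ++ Ns)) (apps (Sym a r) (pre ++ Ns')).
Proof.
  induction 1 as [|N N' Ns Ns' HN _ IH]; intros pre.
  - apply rt_refl.
  - eapply rt_trans; [apply reduces_sym_arg, HN|].
    specialize (IH (pre ++ [N'])). rewrite <- !app_assoc in IH. exact IH.
Qed.

Lemma evaluates_step t t1 T : step X t t1 -> evaluates t1 T -> evaluates t T.
Proof.
  intros Hs [t' [Hr Ht]]. exists t'. split; auto. eapply rt_trans; [apply rt_step|]; eauto.
Qed.

Lemma evaluates_sym a Ns Ts :
  Forall2 evaluates Ns Ts -> evaluates (apps (Sym a (length Ns)) Ns) (Node a Ts).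
Proof.
  intros H.
  assert (exists Ns', Forall2 (reduces X) Ns Ns' /\ Forall2 is_tree Ns' Ts) as [Ns' [Hr Ht]].
  { induction H as [|N T Ns Ts [N' [HN HT]] _ [Ns' [Hr Ht]]].
    - exists []; split; constructor.
    - exists (N' :: Ns'); split; constructor; auto. }
  exists (apps (Sym a (length Ns)) Ns'). split.
  - exact (reduces_sym_args _ _ _ _ Hr []).
  - rewrite (Forall2_length Hr). constructor. assumption.
Qed.

Lemma evaln_evaluates n : forall t T, evaln n t T -> evaluates t T.
Proof.
  induction n; intros t T H; inversion H; subst.
  - eapply evaluates_step; [apply step_rule|]; eauto.
  - apply evaluates_sym. eapply Forall2_impl; [|eassumption]. auto.
Qed.

Lemma step_evaln t t1 : step X t t1 -> forall n T, evaln n t1 T -> evaln (S n) t T.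
Proof.
  induction 1 as [R Ms HR Hl | a r Ns1 N N' Ns2 _ IH]; intros n T Hb.
  - eapply evaln_rule; eauto.
  - apply evaln_sym_inv in Hb as [k [Ts [-> [-> [Er HF]]]]].
    apply Forall2_app_inv_l in HF as [T1 [T2 [HF1 [HF2 ->]]]].
    inversion HF2; subst.
    replace (length (Ns1 ++ N' :: Ns2)) with (length (Ns1 ++ N :: Ns2))
      by (rewrite !length_app; reflexivity).
    apply evaln_sym, Forall2_app; [|constructor; auto];
      eapply Forall2_impl; try eassumption; apply evaln_S.
Qed.

Lemma evaln_Forall2_bound Ns Ts : Forall2 (fun N T => exists n, evaln n N T) Ns Ts ->
  exists n, Forall2 (evaln n) Ns Ts.
Proof.
  induction 1 as [|N T Ns Ts [n Hn] _ [m Hm]].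
  - exists 0; constructor.
  - exists (max n m). constructor.
    + eapply evaln_le; [|eauto]; lia.
    + eapply Forall2_impl; [|eassumption]. intros; eapply evaln_le; [|eauto]; lia.
Qed.

Lemma is_tree_evaln T : forall t, is_tree t T -> exists n, evaln n t T.
Proof.
  induction T as [a Ts IH] using tree_ind_nested. intros t H.
  inversion H as [? Ns ? HF]; subst.
  destruct (evaln_Forall2_bound Ns Ts) as [n Hn].
  { clear H. induction HF; inversion IH; subst; constructor; auto. }
  exists (S n). constructor. assumption.
Qed.

Lemma evaluates_evaln t T : evaluates t T -> exists n, evaln n t T.
Proof.
  intros [t' [Hr Ht]]. apply clos_rt_rt1n in Hr. induction Hr as [|t t1 t' Hs _ IH].
  - eapply is_tree_evaln; eauto.
  - destruct (IH Ht) as [n Hn]. exists (S n). eapply step_evaln; eauto.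
Qed.

Lemma evaluates_sym_inv a r L T : evaluates (apps (Sym a r) L) T ->
  exists Ts, T = Node a Ts /\ Forall2 evaluates L Ts.
Proof.
  intros H. apply evaluates_evaln in H as [n H].
  apply evaln_sym_inv in H as [k [Ts [_ [-> [_ HF]]]]].
  exists Ts. split; auto. eapply Forall2_impl; [|eassumption]. apply evaln_evaluates.
Qed.

Definition productive_from (t : term) : Prop :=
  forall t', reduces X t t' -> exists T, evaluates t' T.

Lemma productive_from_rule R Ms : In R (h_rules X) -> length Ms = length (r_params R) ->
  productive_from (apps (NT (r_lhs R)) Ms) -> productive_from (subst Ms (r_body R)).
Proof.
  intros HR Hl HP t' Hr. apply HP. eapply rt_trans; [apply rt_step, step_rule|]; eauto.
Qed.

Lemma productive_from_args a r L :
  productive_from (apps (Sym a r) L) -> Forall productive_from L.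
Proof.
  intros HP. apply Forall_forall. intros N HN t' Hr.
  apply in_split in HN as [L1 [L2 ->]].
  destruct (HP _ (reduces_sym_arg a r L1 _ _ L2 Hr)) as [T HT].
  apply evaluates_sym_inv in HT as [Ts [_ HF]].
  apply Forall2_app_inv_l in HF as [T1 [T2 [_ [HF2 _]]]].
  inversion HF2; eauto.
Qed.

End Evaluation.

Lemma Forall2_nth {B C} (R : B -> C -> Prop) xs ys : Forall2 R xs ys ->
  forall i dx dy, i < length xs -> R (nth i xs dx) (nth i ys dy).
Proof.
  induction 1; intros i dx dy Hi; simpl in *; [lia|].
  destruct i; auto. apply IHForall2. lia.
Qed.

Lemma nth_Forall2 {B C} (R : B -> C -> Prop) xs ys dx dy : length xs = length ys ->
  (forall i, i < length xs -> R (nth i xs dx) (nth i ys dy)) -> Forall2 R xs ys.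
Proof.
  revert ys. induction xs; intros [|y ys] Hl H; simpl in *; try discriminate; constructor.
  - apply (H 0). lia.
  - apply IHxs; [lia|]. intros i Hi. apply (H (S i)). lia.
Qed.

Lemma Forall2_map_l_inv {B C D} (R : C -> D -> Prop) (f : B -> C) xs ys :
  Forall2 R (map f xs) ys -> Forall2 (fun x y => R (f x) y) xs ys.
Proof.
  revert ys. induction xs; intros ys H; inversion H; subst; constructor; auto.
Qed.

Lemma Forall_Forall2_map {B C D} (R : C -> D -> Prop) (f : B -> C) (g : B -> D) xs :
  Forall (fun x => R (f x) (g x)) xs -> Forall2 R (map f xs) (map g xs).
Proof. induction 1; constructor; auto. Qed.

Lemma Forall2_eq_map {B C} (f : B -> C) xs ys :
  Forall2 (fun x y => f x = y) xs ys -> ys = map f xs.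
Proof. induction 1; simpl; congruence. Qed.

Lemma Forall2_impl_in {B C} (R R' : B -> C -> Prop) xs ys :
  (forall x y, In x xs -> R x y -> R' x y) -> Forall2 R xs ys -> Forall2 R' xs ys.
Proof. intros H HF. induction HF; constructor; simpl in *; auto. Qed.

Lemma Sorted_lt_NoDup l : Sorted lt l -> NoDup l.
Proof.
  intros H. apply Sorted_StronglySorted in H; [|intros x y z; lia].
  induction H as [|a l _ IH Ha]; constructor; auto.
  intros Hin. rewrite Forall_forall in Ha. specialize (Ha a Hin). lia.
Qed.

Lemma nth_map_seq {B} (f : nat -> B) r i d : i < r -> nth i (map f (seq 0 r)) d = f i.
Proof.
  intros Hi. rewrite nth_indep with (d' := f 0) by (rewrite length_map, length_seq; lia).
  rewrite map_nth, seq_nth; auto.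
Qed.

Lemma bounded_choice {B} (d : B) (Q : nat -> B -> Prop) r :
  (forall i, i < r -> exists x, Q i x) -> exists f, forall i, i < r -> Q i (f i).
Proof.
  induction r as [|r IH]; intros H.
  - exists (fun _ => d). intros i Hi. lia.
  - destruct IH as [f Hf]; [intros i Hi; apply H; lia|].
    destruct (H r) as [x Hx]; [lia|].
    exists (fun i => if i =? r then x else f i). intros i Hi.
    destruct (Nat.eqb_spec i r); subst; auto. apply Hf. lia.
Qed.

Lemma nodup_choice {B C} (d : B) (Q : nat -> B -> Prop) (W : B -> C -> Prop) r ks us :
  NoDup ks -> Forall (fun i => i < r) ks -> (forall i, i < r -> exists x, Q i x) ->
  Forall2 (fun i u => exists x, Q i x /\ W x u) ks us ->
  exists xs, length xs = r /\ (forall i, i < r -> Q i (nth i xs d)) /\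
    Forall2 (fun i u => W (nth i xs d) u) ks us.
Proof.
  intros Hnd Hks Htot HF.
  assert (exists f, (forall i, i < r -> Q i (f i)) /\ Forall2 (fun i u => W (f i) u) ks us)
    as [f [HQ HW]].
  { clear Hks. induction HF as [|i u ks us [x [Hx Hw]] _ IH].
    - destruct (bounded_choice d Q r Htot) as [f Hf]. exists f. split; auto.
    - inversion Hnd as [|? ? Hi Hnd']; subst.
      destruct (IH Hnd') as [f [Hf HFf]].
      exists (fun j => if j =? i then x else f j). split.
      + intros j Hj. destruct (Nat.eqb_spec j i); subst; auto.
      + constructor; [rewrite Nat.eqb_refl; exact Hw|].
        eapply Forall2_impl_in; [|exact HFf]. intros j v Hj Hv.
        destruct (Nat.eqb_spec j i); congruence. }
  exists (map f (seq 0 r)). split; [|split].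
  - rewrite length_map, length_seq. reflexivity.
  - intros i Hi. rewrite nth_map_seq; auto.
  - eapply Forall2_impl_in; [|exact HW]. intros i u Hi Hu.
    rewrite Forall_forall in Hks. rewrite nth_map_seq; auto.
Qed.

Definition covers (A : restriction) (T : tree) : Prop :=
  forall a r, appears a r T -> exists tr, In tr A /\ t_src tr = a /\ t_rank tr = r.

Lemma covers_child A a Ts T : covers A (Node a Ts) -> In T Ts -> covers A T.
Proof. intros H HT a' r' Ha. apply H. eapply appears_below; eauto. Qed.

Lemma transduce_total A T : covers A T -> exists U, transduce A T U.
Proof.
  induction T as [a Ts IH] using tree_ind_nested. intros Hcov.
  assert (exists Us, Forall2 (transduce A) Ts Us) as [Us HUs].
  { assert (Hc : forall T, In T Ts -> covers A T) by eauto using covers_child.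
    clear Hcov. induction IH as [|T Ts HT _ IH].
    - exists []. constructor.
    - destruct (HT (Hc T (or_introl eq_refl))) as [U HU].
      destruct IH as [Us HUs]; [intros; apply Hc; right; auto|].
      exists (U :: Us). constructor; auto. }
  destruct (Hcov a (length Ts) (appears_here _ _ _ eq_refl))
    as [[src rank tgt kept] [HIn [Hs Hr]]]; simpl in *; subst.
  eexists. econstructor; eauto.
Qed.

Lemma transduce_node_kept A a b kept Ts Us :
  In (mkTr a (length Ts) b kept) A -> NoDup kept ->
  Forall (fun i => i < length Ts) kept -> covers A (Node a Ts) ->
  Forall2 (fun i u => transduce A (nth i Ts (Node 0 [])) u) kept Us ->
  transduce A (Node a Ts) (Node b Us).
Proof.
  intros HIn Hnd Hk Hcov HF. set (d := Node 0 []) in HF.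
  destruct (nodup_choice d (fun i u => transduce A (nth i Ts d) u) (fun x u => x = u)
              (length Ts) kept Us Hnd Hk) as [Us0 [HlU [HU0 HUs]]].
  - intros i Hi. apply transduce_total. eapply covers_child; [eassumption|]. apply nth_In. lia.
  - eapply Forall2_impl; [|exact HF]. intros i u Hu. exists u. auto.
  - rewrite (Forall2_eq_map _ _ _ HUs). constructor; auto.
    apply (nth_Forall2 _ _ _ d d); auto.
Qed.

(* Nonterminal [k] of S becomes [2 * k] in S'; the symbol [a^r] becomes the odd
   nonterminal [sym_nt a r], via Cantor pairing. *)
Definition sym_nt (a r : nat) : nat := S (2 * to_nat (a, r)).

Lemma sym_nt_inj a r a' r' : sym_nt a r = sym_nt a' r' -> a = a' /\ r = r'.
Proof.
  unfold sym_nt. intros E. assert (E' : to_nat (a, r) = to_nat (a', r')) by lia.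
  apply (f_equal of_nat) in E'. rewrite !cancel_of_to in E'. inversion E'. auto.
Qed.

Lemma sym_nt_neq_double a r k : sym_nt a r <> 2 * k.
Proof. unfold sym_nt. lia. Qed.

Fixpoint embed (t : term) : term :=
  match t with
  | Sym a r => NT (sym_nt a r)
  | NT k => NT (2 * k)
  | Var i => Var i
  | App t u => App (embed t) (embed u)
  end.

Definition restrict_ntsort (N : nat -> sort) (m : nat) : sort :=
  if Nat.even m then N (Nat.div2 m) else sym_sort (snd (of_nat (Nat.div2 m))).

Definition embed_rule (R : rule) : rule :=
  mkRule (2 * r_lhs R) (r_params R) (embed (r_body R)).

Definition transition_rule (tr : transition) : rule :=
  mkRule (sym_nt (t_src tr) (t_rank tr)) (repeat O (t_rank tr))
    (apps (Sym (t_tgt tr) (length (t_kept tr))) (map Var (t_kept tr))).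

Definition restrict_hors (X : hors) (A : restriction) : hors :=
  mkHORS (restrict_ntsort (h_ntsort X)) (2 * h_init X)
    (map embed_rule (h_rules X) ++ map transition_rule A).

Lemma restrict_ntsort_double N k : restrict_ntsort N (2 * k) = N k.
Proof. unfold restrict_ntsort. rewrite Nat.even_mul, Nat.div2_double. reflexivity. Qed.

Lemma restrict_ntsort_sym N a r : restrict_ntsort N (sym_nt a r) = sym_sort r.
Proof.
  unfold restrict_ntsort, sym_nt.
  rewrite Nat.even_succ, Nat.odd_mul, Nat.div2_succ_double, cancel_of_to. reflexivity.
Qed.

Lemma embed_apps l : forall h, embed (apps h l) = apps (embed h) (map embed l).
Proof. induction l; intros h; [reflexivity|]. rewrite !apps_cons, IHl. reflexivity. Qed.

Lemma embed_subst Ms t : embed (subst Ms t) = subst (map embed Ms) (embed t).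
Proof.
  induction t as [| |i|t1 IH1 t2 IH2]; simpl; auto.
  - change (Var i) with (embed (Var i)) at 2. rewrite map_nth. reflexivity.
  - rewrite IH1, IH2. reflexivity.
Qed.

Lemma embed_has_sort N G t s : has_sort N G t s -> has_sort (restrict_ntsort N) G (embed t) s.
Proof.
  induction 1; simpl.
  - rewrite <- (restrict_ntsort_sym N a r). constructor.
  - rewrite <- (restrict_ntsort_double N A). constructor.
  - constructor. assumption.
  - econstructor; eauto.
Qed.

Lemma sym_sort_arrows r : sym_sort r = arrows (repeat O r).
Proof. induction r; simpl; congruence. Qed.

Lemma has_sort_apps_vars N G ks : Forall (fun i => nth_error G i = Some O) ks ->
  forall h, has_sort N G h (sym_sort (length ks)) -> has_sort N G (apps h (map Var ks)) O.
Proof.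
  induction 1; intros h Hh; [exact Hh|].
  simpl map. rewrite apps_cons. apply IHForall. econstructor; [exact Hh|]. constructor. assumption.
Qed.

Lemma restrict_hors_wf X A : wf_hors X -> wf_restriction A -> wf_hors (restrict_hors X A).
Proof.
  intros [Hinit HR] HA. split.
  - exact (eq_trans (restrict_ntsort_double _ _) Hinit).
  - cbn [restrict_hors h_rules h_ntsort]. intros R HIn.
    apply in_app_or in HIn as [HIn|HIn]; apply in_map_iff in HIn as [x [<- Hx]].
    + destruct (HR x Hx) as [Hlhs Hbody]. split; cbn [embed_rule r_lhs r_params r_body].
      * rewrite restrict_ntsort_double. exact Hlhs.
      * apply embed_has_sort. exact Hbody.
    + destruct (HA x Hx) as [_ Hk].
      split; cbn [transition_rule r_lhs r_params r_body].
      * rewrite restrict_ntsort_sym. apply sym_sort_arrows.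
      * apply has_sort_apps_vars; [|constructor].
        eapply Forall_impl; [|exact Hk]. intros i Hi. apply nth_error_repeat. assumption.
Qed.

Lemma restrict_rule_double X A R k :
  In R (h_rules (restrict_hors X A)) -> r_lhs R = 2 * k ->
  exists R0, In R0 (h_rules X) /\ R = embed_rule R0 /\ r_lhs R0 = k.
Proof.
  cbn [restrict_hors h_rules]. intros HIn Hlhs. apply in_app_or in HIn as [HIn|HIn];
    apply in_map_iff in HIn as [x [<- Hx]]; cbn [embed_rule transition_rule r_lhs] in Hlhs.
  - exists x. split; auto. split; auto. lia.
  - exfalso. eapply sym_nt_neq_double; eauto.
Qed.

Lemma restrict_rule_sym X A R a r :
  In R (h_rules (restrict_hors X A)) -> r_lhs R = sym_nt a r ->
  exists b kept, In (mkTr a r b kept) A /\ R = transition_rule (mkTr a r b kept).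
Proof.
  cbn [restrict_hors h_rules]. intros HIn Hlhs. apply in_app_or in HIn as [HIn|HIn];
    apply in_map_iff in HIn as [x [<- Hx]]; cbn [embed_rule transition_rule r_lhs] in Hlhs.
  - exfalso. eapply sym_nt_neq_double; eauto.
  - destruct x as [a' r' b kept]. cbn in Hlhs. apply sym_nt_inj in Hlhs as [-> ->]. eauto.
Qed.

Lemma productive_from_init X : productive X -> productive_from X (NT (h_init X)).
Proof. intros H t Hr. destruct (H t Hr) as [t' [T HT]]. exists T, t'. exact HT. Qed.

Section Restriction.
Variable X : hors.
Variable A : restriction.
Hypothesis HA : wf_restriction A.
Let Y := restrict_hors X A.

Lemma restrict_hors_complete n : forall t T, evaln X n t T ->
  forall U, transduce A T U -> evaluates Y (embed t) U.
Proof.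
  induction n; intros t T H U HU; inversion H as [? R Ms ? HR Hl Hb | ? a Ns Ts HF]; subst.
  - rewrite embed_apps. eapply evaluates_step.
    + apply (step_rule Y (embed_rule R)); [|rewrite length_map; exact Hl].
      apply in_or_app. left. apply in_map. exact HR.
    + cbn [embed_rule r_body]. rewrite <- embed_subst. eauto.
  - inversion HU as [? ? Us b kept Htr HUs]; subst.
    rewrite embed_apps. eapply evaluates_step.
    + apply (step_rule Y (transition_rule (mkTr a (length Ns) b kept))).
      * apply in_or_app. right. apply in_map. rewrite (Forall2_length HF). exact Htr.
      * cbn. rewrite length_map, repeat_length. reflexivity.
    + cbn [transition_rule r_body t_kept t_tgt]. rewrite subst_apps, map_map. cbn [subst].
      rewrite <- (length_map (fun i => nth i (map embed Ns) (Var i)) kept).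
      apply evaluates_sym, Forall_Forall2_map.
      destruct (HA _ Htr) as [_ Hk]. eapply Forall_impl; [|exact Hk]. cbn beta.
      intros i Hi. change (Var i) with (embed (Var i)). rewrite map_nth.
      apply (IHn _ (nth i Ts (Node 0 []))).
      * apply Forall2_nth; auto. rewrite (Forall2_length HF). exact Hi.
      * apply Forall2_nth; auto.
Qed.

Definition sound_at (n : nat) : Prop :=
  forall t U, evaln Y n (embed t) U -> productive_from X t ->
    exists T, evaluates X t T /\ (covers A T -> transduce A T U).

Lemma sound_nt n k l U : (forall m, m < n -> sound_at m) ->
  evaln Y n (embed (apps (NT k) l)) U -> productive_from X (apps (NT k) l) ->
  exists T, evaluates X (apps (NT k) l) T /\ (covers A T -> transduce A T U).
Proof.
  intros IH Hb Hp. rewrite embed_apps in Hb.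
  apply evaln_nt_inv in Hb as [m [R [-> [HR [Hlhs [Hl Hb]]]]]].
  destruct (restrict_rule_double _ _ _ _ HR Hlhs) as [R0 [HR0 [-> <-]]].
  cbn [embed_rule r_params r_body] in Hl, Hb. rewrite length_map in Hl.
  rewrite <- embed_subst in Hb.
  destruct (IH m (Nat.lt_succ_diag_r m) _ _ Hb (productive_from_rule X R0 l HR0 Hl Hp))
    as [T [HT HTU]].
  exists T. split; auto. eapply evaluates_step; [apply step_rule|]; eauto.
Qed.

Lemma sound_sym n a r l U : (forall m, m < n -> sound_at m) ->
  evaln Y n (embed (apps (Sym a r) l)) U -> productive_from X (apps (Sym a r) l) ->
  exists T, evaluates X (apps (Sym a r) l) T /\ (covers A T -> transduce A T U).
Proof.
  intros IH Hb Hp. rewrite embed_apps in Hb.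
  apply evaln_nt_inv in Hb as [m [R [-> [HR [Hlhs [Hl Hb]]]]]].
  destruct (restrict_rule_sym _ _ _ _ _ HR Hlhs) as [b [kept [Htr ->]]].
  cbn [transition_rule r_params r_body t_kept t_tgt t_rank] in Hl, Hb.
  rewrite length_map, repeat_length in Hl.
  rewrite subst_apps, map_map in Hb. cbn [subst] in Hb.
  apply evaln_sym_inv in Hb as [j [Us [-> [-> [_ HF]]]]].
  apply Forall2_map_l_inv in HF.
  destruct (HA _ Htr) as [Hsorted Hk]. cbn [t_kept t_rank] in Hsorted, Hk.
  destruct (Hp _ (rt_refl _ _ _)) as [T0 HT0].
  apply evaluates_sym_inv in HT0 as [T0s [_ HT0s]].
  pose proof (productive_from_args _ _ _ _ Hp) as Hpl. rewrite Forall_forall in Hpl, Hk.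
  destruct (nodup_choice (Node 0 []) (fun i T => evaluates X (nth i l (Var 0)) T)
              (fun T u => covers A T -> transduce A T u) r kept Us
              (Sorted_lt_NoDup _ Hsorted) (proj2 (Forall_forall _ _) Hk))
    as [Ts [HlTs [HTs HUs]]].
  - intros i Hi. exists (nth i T0s (Node 0 [])). apply (Forall2_nth _ _ _ HT0s). lia.
  - eapply Forall2_impl_in; [|exact HF]. intros i u Hi Hu.
    assert (Hil : i < length l) by (rewrite Hl; auto).
    cbn beta in Hu. rewrite nth_indep with (d' := embed (Var 0)), map_nth in Hu
      by (rewrite length_map; lia).
    apply (IH j ltac:(lia) _ _ Hu), Hpl, nth_In, Hil.
  - exists (Node a Ts). split.
    + rewrite <- Hl. apply evaluates_sym, (nth_Forall2 _ _ _ (Var 0) (Node 0 [])); [lia|].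
      intros i Hi. apply HTs. lia.
    + intros Hcov. apply (transduce_node_kept A a b kept); rewrite ?HlTs.
      * exact Htr.
      * apply Sorted_lt_NoDup, Hsorted.
      * apply Forall_forall, Hk.
      * exact Hcov.
      * eapply Forall2_impl_in; [|exact HUs]. intros i u Hi Hu. apply Hu.
        eapply covers_child; [exact Hcov|]. apply nth_In. rewrite HlTs. auto.
Qed.

Lemma restrict_hors_sound n : sound_at n.
Proof.
  induction n as [n IH] using lt_wf_ind. intros t U Hb Hp.
  destruct (apps_unapps t) as [Hh Et].
  set (h := fst (unapps t)) in *. set (l := snd (unapps t)) in *. clearbody h l. subst t.
  destruct h as [a r | k | i | ? ?]; cbn in Hh; try contradiction.
  - eapply sound_sym; eauto.
  - eapply sound_nt; eauto.
  - exfalso. rewrite embed_apps in Hb. eapply evaln_var_inv; eauto.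
Qed.

End Restriction.

Theorem lemma17 (S : hors) (A : restriction) :
  wf_hors S -> productive S -> wf_restriction A ->
  (forall T a r, in_lang S T -> appears a r T ->
     exists tr, In tr A /\ t_src tr = a /\ t_rank tr = r) ->
  { S' : hors | wf_hors S' /\
      forall U, in_lang S' U <-> exists T, in_lang S T /\ transduce A T U }.
Proof.
  intros Hwf Hprod HA Hcov. exists (restrict_hors S A).
  split; [apply restrict_hors_wf; assumption|]. intros U; split.
  - intros HU. destruct (evaluates_evaln _ _ _ HU) as [n Hn].
    destruct (restrict_hors_sound S A HA n (NT (h_init S)) U Hn (productive_from_init S Hprod))
      as [T [HT HTU]].
    exists T. split; auto. apply HTU. intros a r Ha. eapply Hcov; eauto.
  - intros [T [HT HTU]]. destruct (evaluates_evaln _ _ _ HT) as [n Hn].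
    exact (restrict_hors_complete S A HA n _ _ Hn U HTU).
Qed.
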